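(* If $n\ge 1$ and $k\ge 2$ are integers, then the radius of the $k$-Pell graph $\Pi_{n,k}$ is $$\operatorname{rad}(\Pi_{n,k})=\left\lfloor \frac{kn}{2}\right\rfloor.$$
   Context: For an integer $k\ge 2$, a $k$-Pell string is a finite word over the alphabet $\{0,1,\ldots,k-1,kk\}$, i.e. a word over $\{0,1,\ldots,k\}$ in which every maximal run of the letter $k$ has even length. For $n\ge 0$, the $k$-Pell graph $\Pi_{n,k}$ has as vertices all $k$-Pell strings of length $n$, and two vertices are adjacent if one is obtained from the other either by replacing a single letter $i$ by $i+1$ (or vice versa) for some $i\in\{0,1,\ldots,k-2\}$, or by replacing one factor $(k-1)(k-1)$ by $kk$ (or vice versa), in such a way that the resulting string is again a $k$-Pell string. The radius is the minimum eccentricity of a vertex with respect to the shortest-path distance. *)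

From mathcomp Require Import all_boot.
Set Implicit Arguments. Unset Strict Implicit. Unset Printing Implicit Defensive.

(* k-Pell strings: words over the alphabet {0,...,k-1, kk}, i.e. words over
   {0,...,k} parsed letter by letter where the letter k must come as the
   two-letter block kk. *)
Fixpoint pellb (k : nat) (s : seq nat) : bool :=
  match s with
  | [::] => true
  | x :: s' =>
      if x == k then
        (match s' with
         | y :: s'' => (y == k) && pellb k s''
         | [::] => false
         end)
      else pellb k s'
  end.

Definition pell_vertex (n k : nat) : finType :=
  {t : n.-tuple 'I_k.+1 | pellb k (map val t)}.

Definition letter n k (u : pell_vertex n k) (i : nat) : nat :=
  nth 0 (map val (val u)) i.

Definition adj_step n k (u v : pell_vertex n k) : bool :=
  [exists i : 'I_n,
    [forall j : 'I_n, (j != i) ==> (letter u j == letter v j)] &&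
    [&& letter u i < k, letter v i < k &
        (letter u i == (letter v i).+1) || (letter v i == (letter u i).+1)]].

Definition adj_block n k (u v : pell_vertex n k) : bool :=
  [exists i : 'I_n,
    [&& i.+1 < n,
        [forall j : 'I_n, ((j != i) && (val j != i.+1)) ==> (letter u j == letter v j)] &
        ([&& letter u i == k.-1, letter u i.+1 == k.-1,
             letter v i == k & letter v i.+1 == k] ||
         [&& letter v i == k.-1, letter v i.+1 == k.-1,
             letter u i == k & letter u i.+1 == k])]].

Definition pell_adj n k : rel (pell_vertex n k) :=
  fun u v => adj_step u v || adj_block u v.

Definition walk_of_len n k (u v : pell_vertex n k) (m : nat) : bool :=
  [exists p : m.-tuple (pell_vertex n k), path (@pell_adj n k) u p && (last u p == v)].

(* shortest-path distance: least m with a walk of length m; a shortest walk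
   has fewer than #|V| edges, so searching m < #|V| suffices.  (If v is
   unreachable the value is #|V|; Pell graphs are connected, so this
   convention is never used.) *)
Definition pell_dist n k (u v : pell_vertex n k) : nat :=
  find (walk_of_len u v) (iota 0 #|pell_vertex n k|).

Definition pell_ecc n k (u : pell_vertex n k) : nat :=
  \max_(v : pell_vertex n k) pell_dist u v.

(* radius = minimum eccentricity (eccentricities are <= #|V|, and V is nonempty) *)
Definition pell_radius n k : nat :=
  \big[minn/#|pell_vertex n k|]_(u : pell_vertex n k) pell_ecc u.

From mathcomp Require Import all_boot order ssrint zify.
Import Order.TTheory.
Set Implicit Arguments. Unset Strict Implicit. Unset Printing Implicit Defensive.

(* Upper bound: let h = floor(k/2).  From the vertex h^n any vertex is reached by rewriting
   its letters from left to right; a letter x < k costs |x - h| <= k/2 steps and a block kk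
   costs 2 (k - 1 - h) + 1 <= k steps, so h^n has eccentricity at most kn/2.
   Lower bound: give the letter x < k the rank 2x and the letter k the rank 2k - 1.  An edge
   changes the l1-distance of rank vectors by at most 2, and every vertex u has an antipode
   at rank distance at least kn - 1 (letters of rank >= k become 0, the other ones k - 1,
   and two consecutive letters of rank < k the block kk), so every vertex has eccentricity
   at least ceil((kn - 1)/2) = floor(kn/2). *)

Lemma seq_ind2 (T : Type) (P : seq T -> Prop) :
  P [::] -> (forall x, P [:: x]) ->
  (forall x y s, P s -> P (y :: s) -> P [:: x, y & s]) ->
  forall s, P s.
Proof.
move=> P0 P1 P2 s; suff [] : P s /\ forall x, P (x :: s) by [].
by elim: s => [|y s [Ps Pys]]; split => // x; apply: P2.
Qed.

Definition pell_string k (s : seq nat) := all (fun x => x <= k) s && pellb k s.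

Section PellStrings.

Variable k : nat.

Lemma pellb_cat p s : pellb k p -> pellb k (p ++ s) = pellb k s.
Proof.
elim/seq_ind2: p => [|x|x y p IHp IHyp] //=; case: eqP => // _.
by case/andP=> /eqP -> /IHp ->; rewrite eqxx.
Qed.

Lemma pell_string_cat p s : pell_string k p -> pell_string k (p ++ s) = pell_string k s.
Proof. by case/andP=> Ap Pp; rewrite /pell_string all_cat Ap pellb_cat. Qed.

Lemma pell_string_cons x s : x < k -> pell_string k (x :: s) = pell_string k s.
Proof. by move=> ltxk; rewrite /pell_string /= ltn_eqF // ltnW. Qed.

Lemma pell_string_block s : pell_string k [:: k, k & s] = pell_string k s.
Proof. by rewrite /pell_string /= !eqxx leqnn. Qed.

Lemma pell_string_nseq r x : x < k -> pell_string k (nseq r x).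
Proof. by move=> ltxk; elim: r => //= r IHr; rewrite pell_string_cons. Qed.

Lemma pell_string_lt s : all (fun x => x < k) s -> pell_string k s.
Proof. by elim: s => //= x s IHs /andP [ltxk /IHs]; rewrite pell_string_cons. Qed.

Lemma pell_string_head x s : pell_string k (x :: s) -> x != k -> x < k.
Proof. by case/andP=> /= /andP [lexk _] _ neqxk; rewrite ltn_neqAle neqxk. Qed.

Lemma pell_string_ind (P : seq nat -> Prop) :
  P [::] -> (forall x s, x < k -> P s -> P (x :: s)) ->
  (forall s, P s -> P [:: k, k & s]) ->
  forall s, pell_string k s -> P s.
Proof.
move=> P0 Pcons Pblock; elim/seq_ind2 => [|x|x y s IHs IHys] //.
  case: (x =P k) => [-> | /eqP neqxk Hx]; first by rewrite /pell_string /= eqxx /= andbF.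
  exact: Pcons (pell_string_head Hx neqxk) P0.
case: (x =P k) => [-> | /eqP neqxk Hxy].
  case: (y =P k) => [-> | /eqP/negbTE neqyk]; last by rewrite /pell_string /= eqxx neqyk andbF.
  by rewrite pell_string_block => /IHs; apply: Pblock.
have ltxk := pell_string_head Hxy neqxk.
by rewrite pell_string_cons // in Hxy; apply: Pcons ltxk (IHys Hxy).
Qed.

End PellStrings.

Section Vertices.

Variables n k : nat.
Implicit Types u v w : pell_vertex n k.

Definition word u : seq nat := map val (val u).

Lemma letterE u i : letter u i = nth 0 (word u) i.
Proof. by []. Qed.

Lemma size_word u : size (word u) = n.
Proof. by rewrite size_map size_tuple. Qed.

Lemma word_pell u : pell_string k (word u).
Proof.
apply/andP; split; last exact: valP u.
by apply/allP => _ /mapP [x _ ->]; rewrite -ltnS ltn_ord.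
Qed.

Lemma word_inj : injective word.
Proof. by move=> u v /(inj_map val_inj) eq_uv; apply/val_inj/val_inj. Qed.

Lemma word_surj s : size s = n -> pell_string k s -> exists u, word u = s.
Proof.
move=> size_s /andP [le_s_k pell_s].
have val_inord : map val (map (@inord k) s) = s.
  rewrite -map_comp -[RHS]map_id; apply/eq_in_map => x /= s_x.
  by rewrite inordK // ltnS (allP le_s_k).
have size_inord : size (map (@inord k) s) == n by rewrite size_map size_s.
have pell_inord : pellb k (map val (Tuple size_inord)) by rewrite /= val_inord.
by exists (exist _ (Tuple size_inord) pell_inord); rewrite /word /= val_inord.
Qed.

Lemma pellb_widen (t : n.-tuple 'I_k) :
  pellb k (map val (map_tuple (widen_ord (leqnSn k)) t)).
Proof.
suff /andP [] : pell_string k (map val (map_tuple (widen_ord (leqnSn k)) t)) by [].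
by apply/pell_string_lt/allP => _ /mapP [_ /mapP [i _ ->] ->] /=.
Qed.

Definition widen_vertex (t : n.-tuple 'I_k) : pell_vertex n k :=
  exist _ (map_tuple (widen_ord (leqnSn k)) t) (pellb_widen t).

Lemma widen_vertex_inj : injective widen_vertex.
Proof.
move=> t1 t2 /(congr1 (val \o val)) /= /inj_map eq_t.
by apply/val_inj/eq_t => i j /(congr1 val) /= /val_inj.
Qed.

Lemma card_pell_vertex : k ^ n <= #|pell_vertex n k|.
Proof. by have := leq_card _ widen_vertex_inj; rewrite card_tuple card_ord. Qed.

Lemma walk_of_len0 u : walk_of_len u u 0.
Proof. by apply/existsP; exists [tuple]; rewrite /= eqxx. Qed.

Lemma walk_of_len1 u v : pell_adj u v -> walk_of_len u v 1.
Proof. by move=> adj_uv; apply/existsP; exists [tuple v]; rewrite /= adj_uv eqxx. Qed.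

Lemma walk_of_len_cat u v w m1 m2 :
  walk_of_len u v m1 -> walk_of_len v w m2 -> walk_of_len u w (m1 + m2).
Proof.
move=> /existsP [p1 /andP [path1 /eqP last1]] /existsP [p2 /andP [path2 /eqP last2]].
apply/existsP; exists (cat_tuple p1 p2).
by rewrite /= cat_path last_cat last1 path1 path2 last2 eqxx.
Qed.

Lemma pell_dist_le u v m :
  walk_of_len u v m -> m < #|pell_vertex n k| -> pell_dist u v <= m.
Proof.
move=> walk_m lt_m; rewrite /pell_dist leqNgt; apply/negP => /(before_find 0).
by rewrite nth_iota // add0n walk_m.
Qed.

Lemma pell_dist_cases u v :
  walk_of_len u v (pell_dist u v) \/ pell_dist u v = #|pell_vertex n k|.
Proof.
have [has_walk | no_walk] := boolP (has (walk_of_len u v) (iota 0 #|pell_vertex n k|)).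
  left; have := nth_find 0 has_walk; rewrite nth_iota ?add0n //.
  by move: has_walk; rewrite has_find size_iota.
by right; rewrite /pell_dist (hasNfind no_walk) size_iota.
Qed.

End Vertices.

Section RankDistance.

Variable k : nat.

Definition letter_rank x := if x == k then k.*2.-1 else x.*2.

Definition letter_gap x y := `|letter_rank x - letter_rank y|.

Lemma letter_gap_triangle x y z : letter_gap x z <= letter_gap x y + letter_gap y z.
Proof. rewrite /letter_gap; lia. Qed.

Lemma letter_gapxx x : letter_gap x x = 0.
Proof. rewrite /letter_gap; lia. Qed.

Definition word_gap (a b : seq nat) := sumn [seq letter_gap xy.1 xy.2 | xy <- zip a b].

Lemma word_gap_cons x y a b :
  word_gap (x :: a) (y :: b) = letter_gap x y + word_gap a b.
Proof. by []. Qed.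

Lemma sum_letter_gap n a b : size a = n -> size b = n ->
  \sum_(i < n) letter_gap (nth 0 a i) (nth 0 b i) = word_gap a b.
Proof.
elim: a b n => [|x a IHa] [|y b] [|n] //=; first by rewrite big_ord0.
by move=> [size_a] [size_b]; rewrite big_ord_recl IHa.
Qed.

Section VertexRankDist.

Variable n : nat.
Implicit Types u v w : pell_vertex n k.

Definition rank_dist u v := \sum_(i < n) letter_gap (letter u i) (letter v i).

Lemma rank_dist_word u v : rank_dist u v = word_gap (word u) (word v).
Proof. exact: sum_letter_gap (size_word u) (size_word v). Qed.

Lemma rank_dist_triangle u v w : rank_dist u w <= rank_dist u v + rank_dist v w.
Proof.
by rewrite /rank_dist -big_split; apply: leq_sum => i _; apply: letter_gap_triangle.
Qed.

Lemma rank_distxx u : rank_dist u u = 0.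
Proof. by rewrite /rank_dist big1 // => i _; rewrite letter_gapxx. Qed.

Lemma rank_dist_adj u v : pell_adj u v -> rank_dist u v <= 2.
Proof.
rewrite /rank_dist /letter_gap /letter_rank.
case/orP=> [/existsP [i /andP [/forallP same /and3P [ltuk ltvk diff]]] |
            /existsP [i /and3P [lti /forallP same block]]].
  rewrite (bigD1 i) //= big1 => [|j neqji]; last first.
    by move/implyP: (same j) => /(_ neqji) /eqP ->; lia.
  by rewrite !ltn_eqF //; case/orP: diff => /eqP ->; lia.
pose i' := Ordinal lti.
have neqi'i : i' != i by rewrite -val_eqE /= (gtn_eqF (ltnSn i)).
rewrite (bigD1 i) //= (bigD1 i') //= big1 => [|j /andP [neqji neqji']]; last first.
  have neqji'v : val j != i.+1 by [].
  by move/implyP: (same j) => /(_ (introT andP (conj neqji neqji'v))) /eqP ->; lia.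
by case/orP: block => /and4P [/eqP -> /eqP -> /eqP -> /eqP ->]; rewrite eqxx; case: eqP; lia.
Qed.

Lemma rank_dist_path o x (p : seq (pell_vertex n k)) :
  path (@pell_adj n k) x p -> rank_dist o (last x p) <= rank_dist o x + 2 * size p.
Proof.
elim: p x => [|y p IHp] x /=; first by rewrite addn0.
case/andP=> /rank_dist_adj adj_xy /IHp /leq_trans-> //.
rewrite mulnS addnA leq_add2r (leq_trans (rank_dist_triangle o x y)) //.
by rewrite leq_add2l.
Qed.

Lemma rank_dist_walk u v m : walk_of_len u v m -> rank_dist u v <= 2 * m.
Proof.
case/existsP=> p /andP [/(rank_dist_path u) + /eqP last_p].
by rewrite last_p size_tuple rank_distxx.
Qed.

End VertexRankDist.

Definition lower_half x := letter_rank x < k.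

(* For odd k a lone low letter sent to k - 1 falls one short of distance k; pairing it with
   its successor compensates, so the total loss is at most 1. *)
Fixpoint antipode (s : seq nat) : seq nat :=
  match s with
  | [::] => [::]
  | [:: x] => [:: if lower_half x then k.-1 else 0]
  | x :: ((y :: s') as t) =>
      if lower_half x then
        if lower_half y then [:: k, k & antipode s'] else [:: k.-1, 0 & antipode s']
      else 0 :: antipode t
  end.

Lemma antipode_cons2 x y s : antipode [:: x, y & s] =
  if lower_half x then
    if lower_half y then [:: k, k & antipode s] else [:: k.-1, 0 & antipode s]
  else 0 :: antipode (y :: s).
Proof. by []. Qed.

Lemma size_antipode s : size (antipode s) = size s.
Proof.
elim/seq_ind2: s => [|x|x y s IHs IHys] //; rewrite antipode_cons2.
by case: (lower_half x); [case: (lower_half y) | ]; rewrite /= ?IHs ?IHys.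
Qed.

Hypothesis k_ge2 : 2 <= k.

Lemma antipode_pell s : pell_string k (antipode s).
Proof.
have [ltpk lt0k] : k.-1 < k /\ 0 < k by split; lia.
elim/seq_ind2: s => [|x|x y s IHs IHys] //.
  by rewrite [antipode _]/=; case: (lower_half x); rewrite pell_string_cons.
rewrite antipode_cons2; case: (lower_half x); last by rewrite pell_string_cons.
by case: (lower_half y); rewrite ?pell_string_block ?pell_string_cons.
Qed.

Lemma letter_rank_cases x : x <= k ->
  letter_rank x = k.*2.-1 /\ x = k \/ letter_rank x = x.*2 /\ x < k.
Proof. by rewrite /letter_rank leq_eqVlt; case: eqP => [-> | _ /= ltxk]; [left | right]. Qed.

Lemma letter_rank_low x : lower_half x -> letter_rank x = x.*2 /\ x.*2 < k.
Proof. by rewrite /lower_half /letter_rank; case: eqP => [-> | _]; lia. Qed.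

Lemma letter_rank_pred : letter_rank k.-1 = k.-1.*2.
Proof. by rewrite /letter_rank ltn_eqF //; lia. Qed.

Lemma letter_rank0 : letter_rank 0 = 0.
Proof. by rewrite /letter_rank ltn_eqF //; lia. Qed.

Lemma letter_gap_high x : ~~ lower_half x -> k <= letter_gap x 0.
Proof. by rewrite /lower_half /letter_gap letter_rank0 -leqNgt; lia. Qed.

Lemma letter_gap_low_pred x : lower_half x -> k <= letter_gap x k.-1 + 1.
Proof. by move/letter_rank_low; rewrite /letter_gap letter_rank_pred; lia. Qed.

Lemma letter_gap_low_block x : lower_half x -> k <= letter_gap x k.
Proof. by move/letter_rank_low; rewrite /letter_gap /letter_rank eqxx; lia. Qed.

Lemma letter_gap_low_high x y : y <= k -> lower_half x -> ~~ lower_half y ->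
  k.*2 <= letter_gap x k.-1 + letter_gap y 0.
Proof.
move=> /letter_rank_cases rank_y /letter_rank_low rank_x.
by rewrite /lower_half /letter_gap letter_rank_pred letter_rank0 -leqNgt; lia.
Qed.

Lemma antipode_gap s : all (fun x => x <= k) s -> k * size s <= word_gap s (antipode s) + 1.
Proof.
elim/seq_ind2: s => [|x|x y s IHs IHys]; first by rewrite muln0.
  rewrite [antipode _]/= word_gap_cons addn0 muln1 => _.
  by case: ifP => [/letter_gap_low_pred | /negbT /letter_gap_high]; lia.
case/andP=> _ le_ys; have /andP [le_yk le_s] := le_ys.
rewrite antipode_cons2; case: ifP => low_x; [case: ifP => low_y |].
- have := IHs le_s; have := letter_gap_low_block low_x; have := letter_gap_low_block low_y.
  by rewrite !word_gap_cons /=; lia.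
- have := IHs le_s; have := letter_gap_low_high le_yk low_x (negbT low_y).
  by rewrite !word_gap_cons /=; lia.
- have := IHys le_ys; have := letter_gap_high (negbT low_x).
  by rewrite word_gap_cons /=; lia.
Qed.

End RankDistance.

Section CenterWalks.

Variables n k : nat.

Definition word_dist_le (a b : seq nat) (m : nat) :=
  forall u v : pell_vertex n k, word u = a -> word v = b ->
  exists2 m', m' <= m & walk_of_len u v m'.

Lemma word_dist_le_refl a : word_dist_le a a 0.
Proof. by move=> u v <- /word_inj ->; exists 0 => //; apply: walk_of_len0. Qed.

Lemma word_dist_le_trans a b c m1 m2 : size b = n -> pell_string k b ->
  word_dist_le a b m1 -> word_dist_le b c m2 -> word_dist_le a c (m1 + m2).
Proof.
move=> size_b pell_b reach_ab reach_bc u v word_u word_v.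
have [w word_w] := word_surj size_b pell_b.
have [m1' le_m1 walk1] := reach_ab u w word_u word_w.
have [m2' le_m2 walk2] := reach_bc w v word_w word_v.
by exists (m1' + m2'); [apply: leq_add | apply: walk_of_len_cat walk1 walk2].
Qed.

Lemma word_dist_le_adj a b :
  (forall u v : pell_vertex n k, word u = a -> word v = b -> pell_adj u v) ->
  word_dist_le a b 1.
Proof. by move=> adj_ab u v word_u word_v; exists 1 => //; apply/walk_of_len1/adj_ab. Qed.

Lemma nth_cat_cons (p q : seq nat) x y j : j != size p ->
  nth 0 (p ++ x :: q) j = nth 0 (p ++ y :: q) j.
Proof.
rewrite !nth_cat; case: ltngtP => // ltpj _.
by rewrite -(subnSK ltpj).
Qed.

Lemma word_dist_le_step p q x y : x < k -> y < k -> (x == y.+1) || (y == x.+1) ->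
  word_dist_le (p ++ x :: q) (p ++ y :: q) 1.
Proof.
move=> ltxk ltyk diff; apply: word_dist_le_adj => u v word_u word_v.
have lt_pn : size p < n by rewrite -(size_word u) word_u size_cat addnS ltnS leq_addr.
apply/orP; left; apply/existsP; exists (Ordinal lt_pn); apply/andP; split.
  apply/forallP => j; apply/implyP => neq_jp; rewrite !letterE word_u word_v.
  by apply/eqP/nth_cat_cons; rewrite -val_eqE in neq_jp.
by rewrite !letterE word_u word_v /= !nth_cat ltnn subnn /= ltxk ltyk.
Qed.

Lemma nth_cat_cons2 (p q : seq nat) x x' y y' j : j != size p -> j != (size p).+1 ->
  nth 0 (p ++ [:: x, x' & q]) j = nth 0 (p ++ [:: y, y' & q]) j.
Proof.
move=> neq_jp neq_jp1; rewrite (nth_cat_cons _ _ y neq_jp) -!(cat_rcons y).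
by apply: nth_cat_cons; rewrite size_rcons.
Qed.

Lemma word_dist_le_block p q : word_dist_le (p ++ [:: k.-1, k.-1 & q]) (p ++ [:: k, k & q]) 1.
Proof.
apply: word_dist_le_adj => u v word_u word_v.
have lt_pn : (size p).+1 < n by rewrite -(size_word u) word_u size_cat !addnS !ltnS leq_addr.
apply/orP; right; apply/existsP; exists (Ordinal (ltnW lt_pn)); apply/and3P; split => //.
  apply/forallP => j; apply/implyP => /andP [neq_jp neq_jp1]; rewrite !letterE word_u word_v.
  by apply/eqP/nth_cat_cons2; rewrite -val_eqE in neq_jp.
by rewrite !letterE word_u word_v /= !nth_cat ltnn subnn ltnNge leqnSn subSnn /= !eqxx.
Qed.

Lemma word_dist_le_letter p q y z :
  size p + (size q).+1 = n -> pell_string k p -> pell_string k q -> y < k -> z < k ->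
  word_dist_le (p ++ y :: q) (p ++ z :: q) `|y - z|.
Proof.
move=> size_pq pell_p pell_q ltyk ltzk; move dist_yz: `|y - z| => d.
elim: d y dist_yz ltyk => [|d IHd] y dist_yz ltyk.
  by rewrite (_ : y = z); [apply: word_dist_le_refl | lia].
pose y' := if y < z then y.+1 else y.-1.
have [lty'k dist_y'z adj_yy'] : [/\ y' < k, `|y' - z| = d & y' = y.+1 \/ y = y'.+1].
  by rewrite /y'; case: (ltnP y z) => ltyz; split; lia.
rewrite -add1n; apply: (@word_dist_le_trans _ (p ++ y' :: q)).
- by rewrite size_cat.
- by rewrite pell_string_cat // pell_string_cons.
- by apply: word_dist_le_step => //; case: adj_yy' => ->; rewrite eqxx ?orbT.
- exact: IHd.
Qed.

Lemma word_dist_le_to_block p q y :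
  size p + (size q).+2 = n -> pell_string k p -> pell_string k q -> y < k ->
  word_dist_le (p ++ [:: y, y & q]) (p ++ [:: k, k & q]) (`|y - k.-1| + `|y - k.-1| + 1).
Proof.
move=> size_pq pell_p pell_q ltyk; have ltpk : k.-1 < k by lia.
have size_q x x' : size (p ++ [:: x, x' & q]) = n by rewrite size_cat.
have pell_pp : pell_string k (rcons p k.-1).
  by rewrite -cats1 pell_string_cat ?pell_string_cons.
have reach_lo : word_dist_le (p ++ [:: y, y & q]) (p ++ [:: k.-1, y & q]) `|y - k.-1|.
  by apply: word_dist_le_letter; rewrite ?pell_string_cons // -(size_q 0 0) size_cat.
have reach_hi : word_dist_le (p ++ [:: k.-1, y & q]) (p ++ [:: k.-1, k.-1 & q]) `|y - k.-1|.
  have := @word_dist_le_letter (rcons p k.-1) q y k.-1; rewrite !cat_rcons; apply => //.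
  by rewrite size_rcons -(size_q 0 0) size_cat addSnnS.
apply: (word_dist_le_trans (size_q _ _) _ _ (@word_dist_le_block p q)).
  by rewrite pell_string_cat ?pell_string_cons.
apply: (word_dist_le_trans (size_q _ _) _ reach_lo reach_hi).
by rewrite pell_string_cat ?pell_string_cons.
Qed.

Hypothesis k_ge2 : 2 <= k.

Lemma center_word_dist_le q : pell_string k q -> forall p, pell_string k p ->
  size p + size q = n ->
  exists2 c, c.*2 <= k * size q & word_dist_le (p ++ nseq (size q) k./2) (p ++ q) c.
Proof.
have lthk : k./2 < k by lia.
have pell_h r : pell_string k (nseq r k./2) by apply: pell_string_nseq.
move: q; apply: pell_string_ind => [|x q ltxk IHq|q IHq] p pell_p size_pq /=.
- by exists 0 => //; apply: word_dist_le_refl.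
- have pell_px : pell_string k (rcons p x) by rewrite -cats1 pell_string_cat ?pell_string_cons.
  have size_px : size (rcons p x) + size q = n by rewrite size_rcons -size_pq addSnnS.
  have [c le_c] := IHq _ pell_px size_px; rewrite !cat_rcons => reach_c.
  exists (`|k./2 - x| + c); first by lia.
  apply: (word_dist_le_trans _ _ _ reach_c).
  + by rewrite size_cat /= size_nseq -size_pq.
  + by rewrite pell_string_cat ?pell_string_cons.
  + by apply: word_dist_le_letter; rewrite ?size_nseq -?size_pq.
- have pell_pkk : pell_string k (p ++ [:: k; k]) by rewrite pell_string_cat ?pell_string_block.
  have size_pkk : size (p ++ [:: k; k]) + size q = n by rewrite size_cat -addnA -size_pq.
  have [c le_c] := IHq _ pell_pkk size_pkk; rewrite -!catA => reach_c.
  exists (`|k./2 - k.-1| + `|k./2 - k.-1| + 1 + c); first by lia.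
  apply: (word_dist_le_trans _ _ _ reach_c).
  + by rewrite size_cat /= size_nseq -size_pq.
  + by rewrite pell_string_cat ?pell_string_block.
  + by apply: word_dist_le_to_block; rewrite ?size_nseq -?size_pq.
Qed.

End CenterWalks.

Section Eccentricity.

Variables n k : nat.
Hypotheses (k_ge2 : 2 <= k) (n_gt0 : 0 < n).

Lemma half_kn_lt_card : (k * n)./2 < #|pell_vertex n k|.
Proof.
have le_n : n <= k ^ n.-1 by rewrite -{1}(prednK n_gt0) ltn_expl.
have : k * n <= k ^ n by rewrite -[in k ^ n](prednK n_gt0) expnS leq_mul2l le_n orbT.
have := card_pell_vertex n k; lia.
Qed.

Lemma pell_ecc_center (c0 : pell_vertex n k) :
  word c0 = nseq n k./2 -> pell_ecc c0 <= (k * n)./2.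
Proof.
move=> word_c0; apply/bigmax_leqP => v _.
have [c le_c reach] := center_word_dist_le k_ge2 (word_pell v) (p := [::]) isT (size_word v).
rewrite /= size_word in le_c reach.
have [m le_m walk_m] := reach c0 v word_c0 erefl.
have := half_kn_lt_card; have := pell_dist_le walk_m; lia.
Qed.

Lemma pell_ecc_ge (u : pell_vertex n k) : (k * n)./2 <= pell_ecc u.
Proof.
have size_far : size (antipode k (word u)) = n by rewrite size_antipode size_word.
have [v word_v] := word_surj size_far (antipode_pell k_ge2 (word u)).
have far : k * n <= rank_dist u v + 1.
  rewrite rank_dist_word word_v -[in k * n](size_word u).
  by apply: antipode_gap; case/andP: (word_pell u).
apply: leq_trans (leq_bigmax v).
by case: (pell_dist_cases u v) => [/rank_dist_walk | ->]; have := half_kn_lt_card; lia.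
Qed.

End Eccentricity.

Theorem proposition4p1 (n k : nat) : 1 <= n -> 2 <= k ->
  pell_radius n k = (k * n)./2.
Proof.
move=> n_gt0 k_ge2.
have [c0 word_c0] : exists c0 : pell_vertex n k, word c0 = nseq n k./2.
  by apply: word_surj; [rewrite size_nseq | apply: pell_string_nseq; lia].
apply/eqP; rewrite eqn_leq; apply/andP; split.
  exact: leq_trans (@bigmin_le _ nat _ _ c0 _) (pell_ecc_center k_ge2 n_gt0 word_c0).
apply: (@le_bigmin _ nat) => [|u _]; first exact/ltnW/half_kn_lt_card.
exact: pell_ecc_ge.
Qed.
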